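(* Let $F$ be an algebraically closed field and $A$ a symmetric $F$-algebra with symmetrizing linear form $\lambda:A\to F$. Let $I$ be a two-sided ideal of $A$ such that $A/I$ is also a symmetric $F$-algebra, with symmetrizing linear form $\mu:A/I\to F$. Let $\nu:A\to A/I$, $a\mapsto a+I$, be the canonical epimorphism and let $\nu^\ast:A/I\to A$ be its adjoint with respect to $\lambda$ and $\mu$, i.e. the $F$-linear map satisfying $\lambda(\nu^\ast(x)a)=\mu(x\nu(a))$ for all $x\in A/I$, $a\in A$. If $L$ is an ideal of the center $\mathrm{Z}(A/I)$, then $\nu^\ast(L)$ is an ideal of the center $\mathrm{Z}(A)$.
   Context: A symmetrizing linear form on a finite-dimensional algebra $A$ is a linear form $\lambda$ such that $\lambda(ab)=\lambda(ba)$ for all $a,b$ and whose kernel contains no nonzero left (or right) ideal; equivalently $(a,b)\mapsto\lambda(ab)$ is a nondegenerate symmetric associative bilinear form. *)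

From HB Require Import structures.
From mathcomp Require Import all_boot all_order all_algebra all_field.
Set Implicit Arguments. Unset Strict Implicit. Unset Printing Implicit Defensive.
Import GRing.Theory.
Local Open Scope ring_scope.

Definition in_center (R : nzRingType) (z : R) : Prop := forall b : R, z * b = b * z.

Definition is_left_ideal (R : nzRingType) (J : R -> Prop) : Prop :=
  [/\ J 0, (forall x y, J x -> J y -> J (x - y)) & (forall r x, J x -> J (r * x))].

Definition is_linear_form (F : fieldType) (A : falgType F) (lam : A -> F) : Prop :=
  forall (k : F) (a b : A), lam (k *: a + b) = k * lam a + lam b.

Definition symmetrizing (F : fieldType) (A : falgType F) (lam : A -> F) : Prop :=
  [/\ is_linear_form lam,
      (forall a b : A, lam (a * b) = lam (b * a)) &
      (forall J : A -> Prop, is_left_ideal J -> (forall x, J x -> lam x = 0) ->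
         forall x, J x -> x = 0)].

(* An ideal of the center Z(R) of R (Z(R) is commutative, so ideal = two-sided). *)
Definition is_center_ideal (R : nzRingType) (L : R -> Prop) : Prop :=
  [/\ (forall x, L x -> in_center x),
      L 0,
      (forall x y, L x -> L y -> L (x - y)) &
      (forall z x, in_center z -> L x -> L (z * x))].

Definition is_alg_epi (F : fieldType) (A B : falgType F) (nu : A -> B) : Prop :=
  [/\ (forall (k : F) (a b : A), nu (k *: a + b) = k *: nu a + nu b),
      (forall a b : A, nu (a * b) = nu a * nu b),
      nu 1 = 1 &
      (forall y : B, exists a : A, nu a = y)].

From HB Require Import structures.
From mathcomp Require Import all_boot all_order all_algebra all_field.
Set Implicit Arguments. Unset Strict Implicit. Unset Printing Implicit Defensive.
Import GRing.Theory.
Local Open Scope ring_scope.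

(* The adjoint [nu_star] is a homomorphism of A-bimodules, A acting on A/I
   through [nu]: by adjointness and the symmetry of [lam] and [mu], both sides
   of each identity pair under [lam] with every [c] to the same value, and
   [lam] is nondegenerate.  So [nu_star] maps the centre of A/I into the centre
   of A, and [z * nu_star x = nu_star (nu z * x)] with [nu z] central in A/I
   whenever [z] is central in A. *)

Lemma symmetrizing_inj (F : fieldType) (A : falgType F) (lam : A -> F)
    (x y : A) :
  symmetrizing lam -> (forall c, lam (x * c) = lam (y * c)) -> x = y.
Proof.
case=> lam_lin lam_sym lam_nondeg eq_xy.
have lamB : {morph lam : a b / a - b} := zmod_morphism_linear lam_lin.
apply/subr0_eq.
apply: (lam_nondeg (fun a => forall c, lam (a * c) = 0)).
- split=> [c | a b Ha Hb c | r a Ha c].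
  + by rewrite mul0r -(subrr 0) lamB subrr.
  + by rewrite mulrBl lamB Ha Hb subrr.
  + by rewrite -mulrA lam_sym -mulrA Ha.
- by move=> a /(_ 1); rewrite mulr1.
- by move=> c; rewrite mulrBl lamB eq_xy subrr.
Qed.

Lemma alg_epi_center (F : fieldType) (A B : falgType F) (nu : A -> B) (z : A) :
  is_alg_epi nu -> in_center z -> in_center (nu z).
Proof.
case=> _ nuM _ nu_onto z_center b.
by have [a <-] := nu_onto b; rewrite -!nuM z_center.
Qed.

Section Adjoint.

Variables (F : fieldType) (A B : falgType F).
Variables (lam : A -> F) (mu : B -> F) (nu : A -> B) (nu_star : B -> A).
Hypothesis symm_lam : symmetrizing lam.
Hypothesis mu_sym : forall x y : B, mu (x * y) = mu (y * x).
Hypothesis nuM : forall a b : A, nu (a * b) = nu a * nu b.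
Hypothesis adj_nu : forall (x : B) (a : A), lam (nu_star x * a) = mu (x * nu a).

Lemma nu_star_mulr (x : B) (a : A) : nu_star (x * nu a) = nu_star x * a.
Proof.
apply: (symmetrizing_inj symm_lam) => c.
by rewrite -mulrA !adj_nu nuM mulrA.
Qed.

Lemma nu_star_mull (a : A) (x : B) : nu_star (nu a * x) = a * nu_star x.
Proof.
have [_ lam_sym _] := symm_lam.
apply: (symmetrizing_inj symm_lam) => c.
rewrite adj_nu -[in RHS]mulrA [in RHS]lam_sym -[in RHS]mulrA adj_nu nuM.
by rewrite mulrA [in RHS]mu_sym mulrA.
Qed.

Lemma nu_star_center (x : B) : in_center x -> in_center (nu_star x).
Proof. by move=> x_center b; rewrite -nu_star_mulr -nu_star_mull x_center. Qed.

End Adjoint.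

Theorem proposition2 (F : closedFieldType) (A B : falgType F)
    (lam : A -> F) (mu : B -> F) (nu : A -> B) (nu_star : B -> A)
    (L : B -> Prop) :
  symmetrizing lam ->
  symmetrizing mu ->
  is_alg_epi nu ->
  (forall (k : F) (x y : B), nu_star (k *: x + y) = k *: nu_star x + nu_star y) ->
  (forall (x : B) (a : A), lam (nu_star x * a) = mu (x * nu a)) ->
  is_center_ideal L ->
  is_center_ideal (fun a : A => exists2 x : B, L x & a = nu_star x).
Proof.
move=> symm_lam [_ mu_sym _] nu_epi nu_star_lin adj_nu [L_center L0 LB LM].
have [_ nuM _ _] := nu_epi.
have nu_starB : {morph nu_star : x y / x - y}.
  exact: zmod_morphism_linear nu_star_lin.
split.
- move=> a [x /L_center x_center ->].
  exact: (nu_star_center symm_lam mu_sym nuM adj_nu x_center).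
- by exists 0 => //; rewrite -(subrr (0 : B)) nu_starB subrr.
- move=> a b [x Lx ->] [y Ly ->].
  by exists (x - y); [exact: LB | rewrite nu_starB].
- move=> z a z_center [x Lx ->]; exists (nu z * x).
    exact/LM/Lx/(alg_epi_center nu_epi).
  by rewrite (nu_star_mull symm_lam mu_sym nuM adj_nu).
Qed.
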